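(* Let $m,n$ be positive integers and $x\ge 2$ real. Define $\alpha_j\ge 0$ ($1\le j\le n$) and $\beta_k\ge0$ ($1\le k\le m$) by $$\cosh\alpha_j+\cos\frac{\pi(j-\frac12)}{n}=x=\cosh\beta_k+\cos\frac{\pi(k-\frac12)}{m}.$$ Then $$\prod_{j=1}^n 2\cosh(m\alpha_j)=\prod_{k=1}^m 2\cosh(n\beta_k).$$ *)

From Stdlib Require Import Reals Lra Lia.
Open Scope R_scope.

Fixpoint prod_1_to (f : nat -> R) (n : nat) : R :=
  match n with
  | O => 1
  | S k => prod_1_to f k * f (S k)
  end.

(* The identity [2 cosh (m a) = D_m (2 cosh a)] for the Dickson polynomial
   [D_m] (the monic rescaling [D_m (2 z) = 2 T_m z] of the Chebyshev
   polynomial), together with the factorisation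
   [D_m z = prod_k (z - 2 cos (pi (k - 1/2) / m))] over its m distinct roots,
   turns the left-hand side into the double product
   [prod_j prod_k (2 x - 2 cos (pi (j - 1/2) / n) - 2 cos (pi (k - 1/2) / m))],
   because [2 cosh alpha_j = 2 x - 2 cos (pi (j - 1/2) / n)].  This double
   product is symmetric in (m, n), so it also equals the right-hand side. *)

From Stdlib Require Import Reals Lra Lia.
Open Scope R_scope.

Fixpoint dickson (m : nat) (z : R) : R :=
  match m with
  | O => 2
  | S O => z
  | S ((S k) as k') => z * dickson k' z - dickson k z
  end.

Section DAlembert.

Variable c : R -> R.
Hypothesis c0 : c 0 = 1.
Hypothesis c_add_sub : forall a t, c (a + t) + c (a - t) = 2 * c a * c t.

Lemma dickson_dalembert m t : dickson m (2 * c t) = 2 * c (INR m * t).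
Proof.
enough (H : dickson m (2 * c t) = 2 * c (INR m * t) /\
            dickson (S m) (2 * c t) = 2 * c (INR (S m) * t)) by apply H.
induction m as [|m [IH1 IH2]].
- simpl. rewrite Rmult_0_l, c0, Rmult_1_l. split; ring.
- split; [exact IH2|].
  change (dickson (S (S m)) (2 * c t)) with
    (2 * c t * dickson (S m) (2 * c t) - dickson m (2 * c t)).
  rewrite IH1, IH2.
  pose proof (c_add_sub (INR (S m) * t) t) as E.
  replace (INR (S (S m)) * t) with (INR (S m) * t + t) by (rewrite (S_INR (S m)); ring).
  replace (INR m * t) with (INR (S m) * t - t) by (rewrite (S_INR m); ring).
  lra.
Qed.

End DAlembert.

Lemma cos_add_sub a t : cos (a + t) + cos (a - t) = 2 * cos a * cos t.
Proof. rewrite cos_plus, cos_minus. ring. Qed.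

Lemma cosh_add_sub a t : cosh (a + t) + cosh (a - t) = 2 * cosh a * cosh t.
Proof.
unfold cosh.
replace (- (a + t)) with (- a + - t) by ring.
replace (- (a - t)) with (- a + t) by ring.
replace (a - t) with (a + - t) by ring.
rewrite !exp_plus. field.
Qed.

Lemma dickson_cos m t : dickson m (2 * cos t) = 2 * cos (INR m * t).
Proof. apply dickson_dalembert; [exact cos_0 | exact cos_add_sub]. Qed.

Lemma dickson_cosh m t : dickson m (2 * cosh t) = 2 * cosh (INR m * t).
Proof. apply dickson_dalembert; [exact cosh_0 | exact cosh_add_sub]. Qed.

Definition dickson_root (m k : nat) : R := 2 * cos (PI * (INR k - 1/2) / INR m).

Lemma dickson_root_root m k : (0 < m)%nat -> dickson m (dickson_root m k) = 0.
Proof.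
intros Hm. assert (0 < INR m) by (apply lt_0_INR; lia).
unfold dickson_root. rewrite dickson_cos.
replace (INR m * (PI * (INR k - 1/2) / INR m)) with (INR k * PI - PI/2) by (field; lra).
rewrite cos_minus, cos_PI2, sin_PI2, sin_eq_0_1.
- ring.
- exists (Z.of_nat k). rewrite <- INR_IZR_INZ. reflexivity.
Qed.

Lemma dickson_angle_range m k : (1 <= k <= m)%nat ->
  0 <= PI * (INR k - 1/2) / INR m <= PI.
Proof.
intros Hk. assert (1 <= INR k) by (apply (le_INR 1); lia).
assert (INR k <= INR m) by (apply le_INR; lia).
pose proof PI_RGT_0.
split.
- apply Rmult_le_pos; [apply Rmult_le_pos; lra | left; apply Rinv_0_lt_compat; lra].
- apply Rmult_le_reg_r with (INR m); [lra|].
  unfold Rdiv. rewrite Rmult_assoc, Rinv_l by lra. nra.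
Qed.

(* The angles lie in [0, pi], where [cos] is injective. *)
Lemma dickson_root_inj m a b : (1 <= a <= m)%nat -> (1 <= b <= m)%nat ->
  dickson_root m a = dickson_root m b -> a = b.
Proof.
intros Ha Hb E. unfold dickson_root in E.
assert (0 < INR m) by (apply lt_0_INR; lia). pose proof PI_RGT_0.
apply Rmult_eq_reg_l in E; [|lra].
apply cos_inj in E; try apply dickson_angle_range; auto.
apply INR_eq. unfold Rdiv in E.
apply Rmult_eq_reg_r in E; [|apply Rgt_not_eq, Rinv_0_lt_compat; lra].
apply Rmult_eq_reg_l in E; lra.
Qed.

From mathcomp Require all_boot all_algebra Rstruct.

Module DicksonFactor.

Import all_boot all_algebra Rstruct GRing.Theory.
Local Open Scope ring_scope.

Fixpoint dickson_poly (m : nat) : {poly R} :=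
  match m with
  | O => 2%:P
  | S O => 'X
  | S ((S k) as k') => 'X * dickson_poly k' - dickson_poly k
  end.

Lemma dickson_poly_SS m :
  dickson_poly m.+2 = 'X * dickson_poly m.+1 - dickson_poly m.
Proof. by []. Qed.

Lemma horner_dickson_poly m z : (dickson_poly m).[z] = dickson m z.
Proof.
elim/ltn_ind: m => -[|[|m]] IH; [by rewrite hornerC | by rewrite hornerX |].
rewrite dickson_poly_SS hornerD hornerN hornerM hornerX !IH //.
Qed.

Lemma dickson_poly_size_monic m :
  (0 < m)%N -> size (dickson_poly m) = m.+1 /\ dickson_poly m \is monic.
Proof.
elim/ltn_ind: m => -[|[|m]] IH // _; first by rewrite /= size_polyX monicX.
have [size1 monic1] := IH m.+1 (ltnSn _) isT.
have size0 : (size (dickson_poly m) <= m.+1)%N.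
  case: m IH {size1 monic1} => [|m] IH; first by rewrite /= size_polyC; case: (_ != _).
  by have [-> _] := IH m.+1 (ltnW (ltnSn _)) isT.
have sizeX : size ('X * dickson_poly m.+1) = m.+3.
  by rewrite mulrC size_mulX ?size1 // -size_poly_eq0 size1.
have lt_size : (size (- dickson_poly m)%R < size ('X * dickson_poly m.+1)%R)%N.
  by rewrite size_polyN sizeX; apply: leq_ltn_trans size0 _.
split; first by rewrite dickson_poly_SS size_polyDl // sizeX.
by rewrite monicE dickson_poly_SS lead_coefDl // lead_coefM lead_coefX mul1r.
Qed.

Lemma big_iota_prod_1_to (f : nat -> R) m :
  \prod_(k <- iota 1 m) f k = prod_1_to f m.
Proof.
elim: m => [|m IH]; first by rewrite big_nil.
by rewrite -[m.+1]addn1 iotaD big_cat big_seq1 IH add1n addn1.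
Qed.

Lemma dickson_factor m z : (0 < m)%coq_nat ->
  dickson m z = prod_1_to (fun k => Rminus z (dickson_root m k)) m.
Proof.
move=> /ltP m_gt0.
have [size_m monic_m] := dickson_poly_size_monic m m_gt0.
have in_range k : k \in iota 1 m -> le 1 k /\ le k m.
  by rewrite mem_iota add1n ltnS => /andP[/leP ? /leP ?].
rewrite -horner_dickson_poly
  (all_roots_prod_XsubC (p := dickson_poly m) (rs := map (dickson_root m) (iota 1 m))).
- rewrite (monicP monic_m) scale1r horner_prod big_map -big_iota_prod_1_to.
  apply: eq_bigr => k _; exact: hornerXsubC.
- by rewrite size_map size_iota size_m.
- apply/allP => _ /mapP[k _ ->].
  rewrite /root horner_dickson_poly dickson_root_root; last exact/ltP.
  exact: eqxx.
- rewrite uniq_rootsE map_inj_in_uniq ?iota_uniq // => a b /in_range ? /in_range ?.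
  exact: dickson_root_inj.
Qed.

End DicksonFactor.

Lemma prod_1_to_ext (f g : nat -> R) n :
  (forall j, (1 <= j <= n)%nat -> f j = g j) -> prod_1_to f n = prod_1_to g n.
Proof.
induction n as [|n IH]; intros H; simpl; [reflexivity|].
rewrite IH, H; [reflexivity | lia | intros; apply H; lia].
Qed.

Lemma prod_1_to_mul (f g : nat -> R) n :
  prod_1_to (fun j => f j * g j) n = prod_1_to f n * prod_1_to g n.
Proof. induction n as [|n IH]; simpl; [ring | rewrite IH; ring]. Qed.

Lemma prod_1_to_1 n : prod_1_to (fun _ => 1) n = 1.
Proof. induction n as [|n IH]; simpl; [reflexivity | rewrite IH; ring]. Qed.

Lemma prod_1_to_exchange (g : nat -> nat -> R) n m :
  prod_1_to (fun j => prod_1_to (fun k => g j k) m) n =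
  prod_1_to (fun k => prod_1_to (fun j => g j k) n) m.
Proof.
induction n as [|n IH]; simpl.
- symmetry; apply prod_1_to_1.
- rewrite IH, <- prod_1_to_mul. reflexivity.
Qed.

Lemma cosh_mul_as_double_prod (m n : nat) (x : R) (alpha : nat -> R) :
  (0 < m)%nat ->
  (forall j : nat, (1 <= j <= n)%nat ->
     cosh (alpha j) + cos (PI * (INR j - 1/2) / INR n) = x) ->
  prod_1_to (fun j => 2 * cosh (INR m * alpha j)) n =
  prod_1_to (fun j => prod_1_to
    (fun k => 2 * x - dickson_root n j - dickson_root m k) m) n.
Proof.
intros Hm Ha. apply prod_1_to_ext; intros j Hj.
rewrite <- dickson_cosh, DicksonFactor.dickson_factor by exact Hm.
apply prod_1_to_ext; intros k _.
unfold dickson_root. rewrite <- (Ha j Hj). ring.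
Qed.

Theorem mainTheorem10 (m n : nat) (x : R) (alpha beta : nat -> R) :
  (0 < m)%nat -> (0 < n)%nat -> 2 <= x ->
  (forall j : nat, (1 <= j <= n)%nat ->
     0 <= alpha j /\ cosh (alpha j) + cos (PI * (INR j - 1/2) / INR n) = x) ->
  (forall k : nat, (1 <= k <= m)%nat ->
     0 <= beta k /\ cosh (beta k) + cos (PI * (INR k - 1/2) / INR m) = x) ->
  prod_1_to (fun j => 2 * cosh (INR m * alpha j)) n =
  prod_1_to (fun k => 2 * cosh (INR n * beta k)) m.
Proof.
intros Hm Hn _ Ha Hb.
rewrite (cosh_mul_as_double_prod m n x alpha), (cosh_mul_as_double_prod n m x beta)
  by (assumption || (intros i Hi; apply Ha || apply Hb; exact Hi)).
rewrite prod_1_to_exchange.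
apply prod_1_to_ext; intros k _. apply prod_1_to_ext; intros j _. ring.
Qed.
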